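(* For any $f,g\in[0,1]$ with $G(f)\ne G(g)$, where $G(h)=\overline{o}_1(h)^p\,\overline{o}_2(h)^{1-p}$, $$\lim_{n\to\infty}\mathbb{P}\big(W_0W_n(f)>V_0W_n(g)\big)=\begin{cases}1,& G(f)>G(g),\\ 0,& G(f)<G(g).\end{cases}$$
   Context: Fix real numbers $o_{11},o_{12},o_{21},o_{22}$ with $o_{11}>o_{12}\ge 0$, $o_{22}>o_{21}\ge 0$, $o_{11}>1$, $o_{22}>1$, and $p\in[0,1]$ (convention $0^0=1$). Let $x_1,x_2,\ldots$ be i.i.d. Bernoulli$(p)$. For $h\in[0,1]$ put $\overline{o}_1(h)=o_{11}h+o_{12}(1-h)$, $\overline{o}_2(h)=o_{21}h+o_{22}(1-h)$, and $W_n(h)=\prod_{i=1}^n\overline{o}_1(h)^{x_i}\overline{o}_2(h)^{1-x_i}$; both strategies use the same environment sequence. The random initial sizes $W_0,V_0$ are independent, each uniform on $[0,a]$ for some fixed $a>0$, and independent of $(x_i)$. *)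

From HB Require Import structures.
From mathcomp Require Import all_boot all_order all_algebra.
From mathcomp Require Import all_classical all_reals all_analysis.
Set Implicit Arguments. Unset Strict Implicit. Unset Printing Implicit Defensive.
Import Order.TTheory GRing.Theory Num.Theory.
Local Open Scope classical_set_scope.
Local Open Scope ring_scope.

Definition mutually_independent (d : measure_display) (T : measurableType d)
  (R : realType) (P : probability T R) (I : eqType) (X : I -> T -> R) : Prop :=
  (forall i, measurable_fun setT (X i)) /\
  forall (J : seq I) (B : I -> set R), uniq J -> (forall j, measurable (B j)) ->
    P (\bigcap_(j in [set j | j \in J]) (X j @^-1` B j)) =
    (\prod_(j <- J) P (X j @^-1` B j))%E.

Definition is_bernoulli (d : measure_display) (T : measurableType d)
  (R : realType) (P : probability T R) (p : R) (X : T -> R) : Prop :=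
  P (X @^-1` [set 1]) = p%:E /\ P (X @^-1` [set 0]) = (1 - p)%:E.

Definition is_uniform0a (d : measure_display) (T : measurableType d)
  (R : realType) (P : probability T R) (a : R) (X : T -> R) : Prop :=
  forall B : set R, measurable B ->
    P (X @^-1` B) = ((a^-1)%:E * (@lebesgue_measure R) (B `&` `[0%R, a]%classic))%E.

Definition obar1 (R : realType) (o11 o12 h : R) : R := o11 * h + o12 * (1 - h).
Definition obar2 (R : realType) (o21 o22 h : R) : R := o21 * h + o22 * (1 - h).

(** W_n(h)(t) = prod_{i=1}^n obar1(h)^{x_i} obar2(h)^{1-x_i}  (powR: 0^0 = 1) *)
Definition Wn (R : realType) (T : Type) (o11 o12 o21 o22 : R)
  (x : nat -> T -> R) (n : nat) (h : R) (t : T) : R :=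
  \prod_(1 <= i < n.+1)
    (obar1 o11 o12 h `^ x i t * obar2 o21 o22 h `^ (1 - x i t)).

Definition Grate (R : realType) (o11 o12 o21 o22 p h : R) : R :=
  obar1 o11 o12 h `^ p * obar2 o21 o22 h `^ (1 - p).

Definition joint_family (T : Type) (R : Type) (W0 V0 : T -> R)
  (x : nat -> T -> R) (k : nat) : T -> R :=
  if k == 0%N then W0 else if k == 1%N then V0 else x k.-1.

From HB Require Import structures.
From mathcomp Require Import all_boot all_order all_algebra.
From mathcomp Require Import all_classical all_reals all_analysis.
From mathcomp Require Import measurable_realfun ring lra.
Import Order.TTheory GRing.Theory Num.Theory numFieldNormedType.Exports.
Local Open Scope classical_set_scope.
Local Open Scope ring_scope.

(** Off a null set every [x_i] is 0 or 1, and then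
    [W_n(h) = obar1(h)^K * obar2(h)^(n-K)] where [K] counts the ones among
    [x_1, ..., x_n].  Averaging over all bit patterns gives the mean [np] and the
    variance [np(1-p)] of [K], so by Chebyshev [|K - np| < c_n] with probability
    tending to 1, for a window [c_n] of order [n] (or [1/2] when [p] is 0 or 1).
    Writing [G(h)] as a weighted geometric mean shows that [G(g) < G(f)] forces
    [W_n(g) <= q^n W_n(f)] on that window for some [q < 1].  Hence
    [V_0 W_n(g) <= a q^n W_n(f) < W_0 W_n(f)] once [a q^n < eps], unless
    [W_0 <= eps], an event of probability at most [eps / a] for every [n].  The
    case [G(f) < G(g)] follows by exchanging the roles of the two strategies. *)

Fixpoint bitseqs (n : nat) : seq bitseq :=
  if n is n'.+1 then map (cons true) (bitseqs n') ++ map (cons false) (bitseqs n')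
  else [:: [::]].

Lemma mem_map_cons (c : bool) (L : seq bitseq) (s : bitseq) :
  (s \in map (cons c) L) = if s is b :: s' then (b == c) && (s' \in L) else false.
Proof.
case: s => [|b s]; first by apply/mapP => -[].
apply/mapP/andP => [[u uL [-> ->]]|[/eqP -> sL]]; first by split.
by exists s.
Qed.

Lemma mem_bitseqs n s : (s \in bitseqs n) = (size s == n).
Proof.
elim: n s => [|n IH] s; first by case: s => [|b s]; rewrite inE.
rewrite /= mem_cat !mem_map_cons; case: s => [|b s] //=.
by rewrite eqSS IH; case: b => /=; rewrite ?orbF.
Qed.

Lemma uniq_bitseqs n : uniq (bitseqs n).
Proof.
elim: n => [//|n IH] /=.
rewrite cat_uniq !map_inj_uniq //; try by move=> ? ? [].
rewrite IH /= andbT; apply/hasPn => s /mapP[u _ ->].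
by rewrite /= mem_map_cons.
Qed.

Section BernoulliWeights.
Context {R : realFieldType} (p : R).

Definition bweight (s : bitseq) : R := \prod_(b <- s) (if b then p else 1 - p).

Definition nones (s : bitseq) : R := (count id s)%:R.

Lemma bweight_cons b s : bweight (b :: s) = (if b then p else 1 - p) * bweight s.
Proof. by rewrite /bweight big_cons. Qed.

Lemma bweight_ge0 s : 0 <= p <= 1 -> 0 <= bweight s.
Proof.
move=> /andP[p0 p1]; apply: prodr_ge0 => -[] _ //; lra.
Qed.

Lemma sum_bitseqsS n (F : bitseq -> R) :
  \sum_(s <- bitseqs n.+1) F s =
  \sum_(s <- bitseqs n) F (true :: s) + \sum_(s <- bitseqs n) F (false :: s).
Proof. by rewrite /= big_cat !big_map. Qed.

Lemma sum_bweight n : \sum_(s <- bitseqs n) bweight s = 1.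
Proof.
elim: n => [|n IH]; first by rewrite big_seq1 /bweight big_nil.
rewrite sum_bitseqsS.
under eq_bigr do rewrite bweight_cons.
under [X in _ + X]eq_bigr do rewrite bweight_cons.
by rewrite -!mulr_sumr IH; ring.
Qed.

Lemma sum_bweight_dev n :
  \sum_(s <- bitseqs n) bweight s * (nones s - n%:R * p) = 0.
Proof.
elim: n => [|n IH]; first by rewrite big_seq1 /nones /=; ring.
have E b : \sum_(s <- bitseqs n) bweight (b :: s) * (nones (b :: s) - n.+1%:R * p) =
    (if b then p else 1 - p) * ((b%:R - p) * \sum_(s <- bitseqs n) bweight s
       + \sum_(s <- bitseqs n) bweight s * (nones s - n%:R * p)).
  rewrite mulrDr mulrA !mulr_sumr -big_split /=; apply: eq_bigr => s _.
  by rewrite bweight_cons /nones /= natrD; case: b => /=; ring.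
by rewrite sum_bitseqsS !E IH sum_bweight /=; ring.
Qed.

Lemma sum_bweight_dev2 n :
  \sum_(s <- bitseqs n) bweight s * (nones s - n%:R * p) ^+ 2 = n%:R * (p * (1 - p)).
Proof.
elim: n => [|n IH]; first by rewrite big_seq1 /nones /=; ring.
have E b : \sum_(s <- bitseqs n) bweight (b :: s) * (nones (b :: s) - n.+1%:R * p) ^+ 2 =
    (if b then p else 1 - p) * ((b%:R - p) ^+ 2 * \sum_(s <- bitseqs n) bweight s
      + 2 * (b%:R - p) * \sum_(s <- bitseqs n) bweight s * (nones s - n%:R * p)
      + \sum_(s <- bitseqs n) bweight s * (nones s - n%:R * p) ^+ 2).
  rewrite !mulrDr !mulrA !mulr_sumr -!big_split /=; apply: eq_bigr => s _.
  by rewrite bweight_cons /nones /= natrD; case: b => /=; ring.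
by rewrite sum_bitseqsS !E IH sum_bweight sum_bweight_dev /=; ring.
Qed.

End BernoulliWeights.

Lemma prod_if_count (R : comPzSemiRingType) (u v : R) (s : bitseq) :
  \prod_(b <- s) (if b then u else v) = u ^+ count id s * v ^+ (size s - count id s).
Proof.
elim: s => [|b s IH]; first by rewrite big_nil !expr0 mulr1.
rewrite big_cons IH; case: b => /=; first by rewrite add1n subSS exprS mulrA.
by rewrite add0n subSn ?count_size // exprS mulrCA.
Qed.

Section TypicalProducts.
Context {R : realType}.

Lemma eventually_mulr_expr_lt (A q eps : R) :
  0 <= q < 1 -> 0 < eps -> \forall n \near \oo, A * q ^+ n < eps.
Proof.
move=> /andP[q0 q1] eps0.
have Aq : A * q ^+ n @[n --> \oo] --> A * 0 by apply: cvgMl_tmp; apply: cvg_expr; rewrite ger0_norm.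
rewrite mulr0 in Aq; exact: cvgr_lt Aq _ eps0.
Qed.

Lemma cvg_invn : (fun n : nat => n%:R^-1 : R) @ \oo --> 0.
Proof. by rewrite -cvg_shiftS; exact: cvg_harmonic. Qed.

Lemma typical_count_bounds (p δ : R) (n k : nat) :
  δ <= p -> δ <= 1 - p -> `|k%:R - n%:R * p| < n%:R * δ -> (0 < k < n)%N.
Proof.
move=> δp δq; rewrite ltr_norml => /andP[lo hi].
have n0 : 0 <= n%:R :> R by [].
by rewrite -!(ltr_nat R); apply/andP; split; nra.
Qed.

Lemma typical_ratio_pos (p a1 a2 b1 b2 : R) :
  0 < a1 -> 0 < a2 -> 0 < b1 -> 0 < b2 ->
  b1 `^ p * b2 `^ (1 - p) < a1 `^ p * a2 `^ (1 - p) ->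
  exists q δ, [/\ 0 <= q < 1, 0 < δ & forall n k, (k <= n)%N ->
    `|k%:R - n%:R * p| < n%:R * δ ->
    b1 ^+ k * b2 ^+ (n - k) <= q ^+ n * (a1 ^+ k * a2 ^+ (n - k))].
Proof.
move=> a1p a2p b1p b2p; rewrite /powR !gt_eqF // -!expRD ltr_expR => G.
pose L := ln b1 - ln a1; pose M := ln b2 - ln a2.
pose γ := - (p * L + (1 - p) * M).
have γ0 : 0 < γ by rewrite /γ /L /M; lra.
exists (expR (- (γ / 2))), (γ / (2 * (`|L - M| + 1))); split.
- by rewrite expR_ge0 expR_lt1 oppr_lt0 divr_gt0.
- by rewrite divr_gt0 // mulr_gt0 // ltr_wpDl.
move=> n k kn dev.
have powE (b : R) j : 0 < b -> b ^+ j = expR (j%:R * ln b).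
  by move=> b0; rewrite expRM_natl lnK ?posrE.
rewrite (powE b1) // (powE b2) // (powE a1) // (powE a2) // -expRM_natl -!expRD ler_expR natrB //.
(* The log-ratio is [-n γ + (k - n p)(L - M)], and the deviation term costs at most [n γ / 2]. *)
have -> : k%:R * ln b1 + (n%:R - k%:R) * ln b2 =
    - (n%:R * γ) + (k%:R - n%:R * p) * (L - M) + (k%:R * ln a1 + (n%:R - k%:R) * ln a2).
  by rewrite /γ /L /M; ring.
have dev_LM : (k%:R - n%:R * p) * (L - M) <= n%:R * (γ / (2 * (`|L - M| + 1))) * `|L - M|.
  rewrite (le_trans (ler_norm _)) // normrM ler_wpM2r //; exact: ltW.
have LM_γ : γ / (2 * (`|L - M| + 1)) * `|L - M| <= γ / 2.
  rewrite mulrAC ler_pdivrMr ?mulr_gt0 ?ltr_wpDl //; have := normr_ge0 (L - M); nra.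
have n0 : 0 <= n%:R :> R by [].
rewrite lerD2r; nra.
Qed.

Lemma typical_ratio_interior (p a1 a2 b1 b2 : R) :
  0 < p < 1 -> 0 <= a1 -> 0 <= a2 -> 0 <= b1 -> 0 <= b2 ->
  b1 `^ p * b2 `^ (1 - p) < a1 `^ p * a2 `^ (1 - p) ->
  exists q δ, [/\ 0 <= q < 1, 0 < δ & forall n k, (k <= n)%N ->
    `|k%:R - n%:R * p| < n%:R * δ ->
    0 < a1 ^+ k * a2 ^+ (n - k) /\
    b1 ^+ k * b2 ^+ (n - k) <= q ^+ n * (a1 ^+ k * a2 ^+ (n - k))].
Proof.
move=> /andP[p0 p1] a10 a20 b10 b20 G.
have Gb0 : 0 <= b1 `^ p * b2 `^ (1 - p) by rewrite mulr_ge0 ?powR_ge0.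
have a1p : 0 < a1.
  rewrite lt_def a10 andbT; apply: contraTneq G => ->.
  by rewrite powR0 ?gt_eqF // mul0r -leNgt.
have a2p : 0 < a2.
  rewrite lt_def a20 andbT; apply: contraTneq G => ->.
  by rewrite powR0 ?gt_eqF ?subr_gt0 // mulr0 -leNgt.
have a_prod_gt0 n k : 0 < a1 ^+ k * a2 ^+ (n - k) by rewrite mulr_gt0 ?exprn_gt0.
have [/andP[b1p b2p]|b_zero] := boolP ((0 < b1) && (0 < b2)).
  have [q [δ [q01 δ0 ratio]]] := typical_ratio_pos _ _ _ _ _ a1p a2p b1p b2p G.
  exists q, δ; split=> // n k kn dev.
  by split; [exact: a_prod_gt0 | exact: ratio].
exists 0, (Num.min p (1 - p)); split; first by rewrite lexx ltr01.
  by rewrite lt_min p0 subr_gt0.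
move=> n k _ /typical_count_bounds; rewrite ge_min lexx ge_min lexx orbT.
move=> /(_ isT isT) /andP[k0 kn]; split; first exact: a_prod_gt0.
have -> : b1 ^+ k * b2 ^+ (n - k) = 0.
  have [->|b1n0] := eqVneq b1 0; first by rewrite expr0n eqn0Ngt k0 mul0r.
  have [->|b2n0] := eqVneq b2 0; first by rewrite expr0n eqn0Ngt subn_gt0 kn mulr0.
  by move: b_zero; rewrite !lt_def b1n0 b2n0 b10 b20.
by rewrite mulr_ge0 ?exprn_ge0 // ltW.
Qed.

Lemma typical_ratio (p a1 a2 b1 b2 : R) :
  0 <= p <= 1 -> 0 <= a1 -> 0 <= a2 -> 0 <= b1 -> 0 <= b2 ->
  b1 `^ p * b2 `^ (1 - p) < a1 `^ p * a2 `^ (1 - p) ->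
  exists q (c : nat -> R), [/\ 0 <= q < 1, \forall n \near \oo, 0 < c n,
    n%:R * (p * (1 - p)) / c n ^+ 2 @[n --> \oo] --> 0 &
    forall n k, (k <= n)%N -> `|k%:R - n%:R * p| < c n ->
    0 < a1 ^+ k * a2 ^+ (n - k) /\
    b1 ^+ k * b2 ^+ (n - k) <= q ^+ n * (a1 ^+ k * a2 ^+ (n - k))].
Proof.
(* For [p = 0] or [p = 1] the count is a.s. [np], so the window [c n = 1/2]
   pins [k] down; otherwise the window is [n δ]. *)
move=> /andP[p0 p1] a10 a20 b10 b20.
have edge (a b : R) : 0 <= b < a ->
    0 <= b / a < 1 /\ forall n, 0 < a ^+ n /\ b ^+ n <= (b / a) ^+ n * a ^+ n.
  move=> /andP[b0 ba]; have a0 : 0 < a by exact: le_lt_trans ba.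
  split=> [|n]; first by rewrite divr_ge0 ?ltr_pdivrMr ?mul1r // ltW.
  by rewrite exprn_gt0 // -exprMn divfK ?gt_eqF.
have [->|pn0] := eqVneq p 0.
  rewrite subr0 !powRr0 !powRr1 // !mul1r => G.
  have /edge[q01 ratio] : 0 <= b2 < a2 by rewrite b20.
  exists (b2 / a2), (fun=> 2^-1); split => //.
  - exact: nearW.
  - by under eq_fun do rewrite !(mulr0, mul0r); exact: cvg_cst.
  move=> n k _; rewrite mulr0 subr0 ger0_norm // => k_lt.
  have -> : k = 0%N by apply/eqP; rewrite -leqn0 -ltnS -(ltrn1 R); lra.
  by rewrite subn0 !expr0 !mul1r.
have [->|pn1] := eqVneq p 1.
  rewrite subrr !powRr0 !powRr1 // !mulr1 => G.
  have /edge[q01 ratio] : 0 <= b1 < a1 by rewrite b10.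
  exists (b1 / a1), (fun=> 2^-1); split => //.
  - exact: nearW.
  - by under eq_fun do rewrite !(mulr0, mul0r); exact: cvg_cst.
  move=> n k kn; rewrite mulr1 ltr_norml => /andP[lo _].
  have nk0 : (n - k = 0)%N by apply/eqP; rewrite -leqn0 -ltnS -(ltrn1 R) natrB //; lra.
  have -> : k = n by rewrite -(subnK kn) nk0.
  by rewrite subnn !expr0 !mulr1.
move=> G.
have p01 : 0 < p < 1 by rewrite !lt_def pn0 p0 eq_sym pn1 p1.
have [q [δ [q01 δ0 ratio]]] := typical_ratio_interior _ _ _ _ _ p01 a10 a20 b10 b20 G.
exists q, (fun n => n%:R * δ); split; [exact: q01 | | | exact: ratio].
- by near=> n; rewrite mulr_gt0 // ltr0n; near: n; exists 1%N.
- have -> : (fun n : nat => n%:R * (p * (1 - p)) / (n%:R * δ) ^+ 2) =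
      (fun n : nat => p * (1 - p) / δ ^+ 2 * n%:R^-1).
    apply/funext => n; have [->|n0] := eqVneq n 0%N; first by rewrite !mul0r invr0 mulr0.
    by field; rewrite pnatr_eq0 n0 gt_eqF.
  by rewrite -(mulr0 (p * (1 - p) / δ ^+ 2)); apply: cvgMl_tmp; exact: cvg_invn.
Unshelve. all: by end_near.
Qed.

End TypicalProducts.

Section BernoulliSequence.
Context {R : realType} {d : measure_display} {T : measurableType d}.
Variables (P : probability T R) (x : nat -> T -> R) (p : R).
Hypothesis p01 : 0 <= p <= 1.
Hypothesis x_meas : forall i, measurable_fun setT (x i.+1).
Hypothesis x_bern : forall i, is_bernoulli P p (x i.+1).
Hypothesis x_indep : forall n (B : nat -> set R), (forall i, measurable (B i)) ->
  P (\bigcap_(i in [set i | (i < n)%N]) (x i.+1 @^-1` B i)) =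
  (\prod_(i < n) P (x i.+1 @^-1` B i))%E.

Definition bits n t : bitseq := [seq x i.+1 t == 1 | i <- iota 0 n].

Definition bitset (b : bool) : set R := if b then [set 1] else ~` [set 1].

Lemma size_bits n t : size (bits n t) = n.
Proof. by rewrite size_map size_iota. Qed.

Lemma measurable_bitset b : measurable (bitset b).
Proof. by case: b; [exact: measurable_set1 | apply: measurableC; exact: measurable_set1]. Qed.

Lemma measurable_x_preimage i B : measurable B -> measurable (x i.+1 @^-1` B).
Proof. by move=> mB; rewrite -[X in measurable X]setTI; exact: x_meas. Qed.

Lemma probability_bitset i b :
  P (x i.+1 @^-1` bitset b) = (if b then p else 1 - p)%:E.
Proof.
case: b; first exact: (x_bern i).1.
rewrite /= -preimage_setC probability_setC ?(x_bern i).1 ?EFinB //.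
by apply: measurable_x_preimage; exact: measurable_set1.
Qed.

Lemma bits_eqE n s : size s = n ->
  [set t | bits n t = s] =
  \bigcap_(i in [set i | (i < n)%N]) (x i.+1 @^-1` bitset (nth false s i)).
Proof.
move=> sz; apply/seteqP; split => t /=.
- move=> <- i /= iltn; rewrite (nth_map 0%N) ?size_iota // nth_iota // add0n.
  by rewrite /bitset; case: eqP.
- move=> H; apply: (@eq_from_nth _ false); first by rewrite size_bits sz.
  move=> i; rewrite size_bits => iltn.
  rewrite (nth_map 0%N) ?size_iota // nth_iota // add0n.
  by have := H i iltn; rewrite /bitset; case: nth => /= [->|/eqP/negbTE]; rewrite ?eqxx.
Qed.

Lemma measurable_bits_eq n s : size s = n -> measurable [set t | bits n t = s].
Proof.
move=> sz; rewrite bits_eqE //; apply: bigcap_measurableType => i _.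
by apply: measurable_x_preimage; exact: measurable_bitset.
Qed.

Lemma probability_bits_eq n s : size s = n ->
  P [set t | bits n t = s] = (bweight p s)%:E.
Proof.
move=> sz; rewrite bits_eqE // x_indep => [|i]; last exact: measurable_bitset.
under eq_bigr do rewrite probability_bitset.
by rewrite prodEFin /bweight (big_nth false) big_mkord sz.
Qed.

Lemma probability_bits_in (n : nat) (L : seq bitseq) :
  uniq L -> all (fun s => size s == n) L ->
  measurable [set t | bits n t \in L] /\
  P [set t | bits n t \in L] = (\sum_(s <- L) bweight p s)%:E.
Proof.
elim: L => [|s L IH] /=.
  have -> : [set t | bits n t \in [::]] = set0 by apply/seteqP; split.
  by rewrite big_nil measure0.
move=> /andP[sL uL] /andP[/eqP sz szL]; have [mL PL] := IH uL szL.
have -> : [set t | bits n t \in s :: L] = [set t | bits n t = s] `|` [set t | bits n t \in L].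
  apply/seteqP; split => t /=; rewrite in_cons.
    by case/orP => [/eqP|]; [left | right].
  by case=> [->|->]; rewrite ?eqxx ?orbT.
have ms : measurable [set t | bits n t = s] by exact: measurable_bits_eq.
have disj : [set t | bits n t = s] `&` [set t | bits n t \in L] = set0.
  by apply/seteqP; split => t // [/= ->]; rewrite (negbTE sL).
split; first exact: measurableU.
transitivity (P [set t | bits n t = s] + P [set t | bits n t \in L])%E.
  exact: measureU.
by rewrite PL probability_bits_eq // big_cons EFinD.
Qed.

Lemma probability_bits n (Q : pred bitseq) :
  measurable [set t | Q (bits n t)] /\
  P [set t | Q (bits n t)] = (\sum_(s <- bitseqs n | Q s) bweight p s)%:E.
Proof.
have -> : [set t | Q (bits n t)] = [set t | bits n t \in [seq s <- bitseqs n | Q s]].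
  by apply/seteqP; split => t /=; rewrite mem_filter mem_bitseqs size_bits eqxx andbT.
rewrite -big_filter; apply: probability_bits_in; first exact/filter_uniq/uniq_bitseqs.
by apply/allP => s; rewrite mem_filter mem_bitseqs => /andP[].
Qed.

Lemma bits_deviation_le (n : nat) (c : R) : 0 < c ->
  (P [set t | (c <= `|nones (bits n t) - n%:R * p|)%R] <=
   (n%:R * (p * (1 - p)) / c ^+ 2)%:E)%E.
Proof.
move=> c0; rewrite (probability_bits n (fun s => c <= `|nones s - n%:R * p|)).2 lee_fin.
rewrite -(sum_bweight_dev2 p n) big_mkcond /= mulr_suml; apply: ler_sum => s _.
have w0 := bweight_ge0 p s p01.
case: ifP => [dev|_]; last by rewrite divr_ge0 ?sqr_ge0 // mulr_ge0 ?sqr_ge0.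
rewrite -mulrA; apply: ler_peMr => //.
rewrite ler_pdivlMr ?exprn_gt0 // mul1r -[X in _ <= X]real_normK ?num_real //.
by rewrite lerXn2r ?nnegrE ?(ltW c0).
Qed.

Definition nonbinary : set T := \bigcup_i x i.+1 @^-1` ~` ([set 0] `|` [set 1]).

Lemma measurable_nonbinary : measurable nonbinary.
Proof.
apply: bigcupT_measurable => i; apply: measurable_x_preimage; apply: measurableC.
by apply: measurableU; exact: measurable_set1.
Qed.

Lemma probability_nonbinary : P nonbinary = 0%E.
Proof.
apply: (measure_negligible measurable_nonbinary); apply: negligible_bigcup => i.
have m0 : measurable (x i.+1 @^-1` [set 0]) by apply: measurable_x_preimage; exact: measurable_set1.
have m1 : measurable (x i.+1 @^-1` [set 1]) by apply: measurable_x_preimage; exact: measurable_set1.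
have m01 : measurable (x i.+1 @^-1` ([set 0] `|` [set 1])) by rewrite preimage_setU; exact: measurableU.
apply/negligibleP; first by rewrite -preimage_setC; exact: measurableC.
suff : P (x i.+1 @^-1` ~` ([set 0] `|` [set 1])) = 0%E by [].
rewrite -preimage_setC probability_setC // preimage_setU.
have -> : P (x i.+1 @^-1` [set 0] `|` x i.+1 @^-1` [set 1]) = 1%E.
  transitivity (P (x i.+1 @^-1` [set 0%R]) + P (x i.+1 @^-1` [set 1%R]))%E.
    apply: measureU => //; apply/seteqP; split => t //= [-> ].
    by apply/eqP; rewrite eq_sym oner_eq0.
  by rewrite (x_bern i).1 (x_bern i).2 -EFinD subrK.
by rewrite subee.
Qed.

End BernoulliSequence.

Section ProbabilityLimits.
Context {R : realType} {d : measure_display} {T : measurableType d}.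
Variable P : probability T R.

Lemma cvg_probability0 (E : nat -> set T) :
  (forall eta : R, 0 < eta -> \forall n \near \oo, (P (E n) <= eta%:E)%E) ->
  P (E n) @[n --> \oo] --> 0%E.
Proof.
move=> small.
have fin n r : (P (E n) <= r%:E)%E -> P (E n) \is a fin_num.
  by move=> le_r; rewrite ge0_fin_numE ?measure_ge0 // (le_lt_trans le_r) ?ltry.
apply/fine_cvgP; split; first by apply: filterS (small 1 ltr01) => n /fin.
apply/cvgrPdist_le => e e0; apply: filterS (small e e0) => n /= le_e.
rewrite sub0r normrN ger0_norm ?fine_ge0 ?measure_ge0 //.
by rewrite -lee_fin fineK // (fin _ _ le_e).
Qed.

Lemma cvg_probability1 (E : nat -> set T) : (forall n, measurable (E n)) ->
  P (~` E n) @[n --> \oo] --> 0%E -> P (E n) @[n --> \oo] --> 1%E.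
Proof.
move=> mE PEC0.
have PE n : P (E n) = (1 - P (~` E n))%E.
  by rewrite -probability_setC ?setCK //; exact: measurableC.
under eq_fun do rewrite PE.
have : (1 - P (~` E n))%E @[n --> \oo] --> (1 - 0)%E.
  by apply: cvgeB => //; exact: cvg_cst.
by rewrite sube0.
Qed.

Lemma measurable_ltr_set (f g : T -> R) :
  measurable_fun setT f -> measurable_fun setT g -> measurable [set t | f t < g t].
Proof.
move=> mf mg; rewrite -[X in measurable X]setTI.
exact: (measurable_fun_ltr mf mg measurableT (Y := [set true]) I).
Qed.

Lemma probability_uniform_le (a eps : R) (U : T -> R) :
  0 < a -> is_uniform0a P a U -> 0 <= eps ->
  (P (U @^-1` `]-oo, eps]) <= (eps / a)%:E)%E.
Proof.
move=> a0 unifU eps0; rewrite unifU; last exact: measurable_itv.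
rewrite (_ : (eps / a)%:E = (a^-1)%:E * eps%:E)%E; last by rewrite -EFinM mulrC.
apply: lee_wpmul2l; first by rewrite lee_fin invr_ge0 ltW.
apply: (@le_trans _ _ (lebesgue_measure (`[0, eps]%classic : set R))).
  apply: le_measure; rewrite ?inE /=; [exact: measurableI | exact: measurable_itv |].
  by move=> r /= []; rewrite !in_itv /= => -> /andP[->].
by rewrite lebesgue_measure_itv /=; case: ifP; rewrite ?sube0.
Qed.

Lemma probability_uniform_out (a : R) (U : T -> R) :
  is_uniform0a P a U -> P (U @^-1` ~` `[0, a]) = 0%E.
Proof.
move=> unifU; rewrite unifU; last by apply: measurableC; exact: measurable_itv.
by rewrite setICl measure0 mule0.
Qed.

End ProbabilityLimits.

Lemma convex_comb_ge0 {R : numDomainType} (u v h : R) :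
  0 <= u -> 0 <= v -> 0 <= h <= 1 -> 0 <= u * h + v * (1 - h).
Proof. by move=> u0 v0 /andP[h0 h1]; rewrite addr_ge0 // mulr_ge0 // subr_ge0. Qed.

Section StrategyComparison.
Context {R : realType} {d : measure_display} {T : measurableType d}.
Variables (P : probability T R) (o11 o12 o21 o22 p a : R) (x : nat -> T -> R).
Hypotheses (o11_ge0 : 0 <= o11) (o12_ge0 : 0 <= o12).
Hypotheses (o21_ge0 : 0 <= o21) (o22_ge0 : 0 <= o22).
Hypotheses (p01 : 0 <= p <= 1) (a_gt0 : 0 < a).
Hypothesis x_meas : forall i, measurable_fun setT (x i.+1).
Hypothesis x_bern : forall i, is_bernoulli P p (x i.+1).
Hypothesis x_indep : forall n (B : nat -> set R), (forall i, measurable (B i)) ->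
  P (\bigcap_(i in [set i | (i < n)%N]) (x i.+1 @^-1` B i)) =
  (\prod_(i < n) P (x i.+1 @^-1` B i))%E.

Local Notation W := (Wn o11 o12 o21 o22 x).
Local Notation G := (Grate o11 o12 o21 o22 p).
Local Notation Wk h n k := (obar1 o11 o12 h ^+ k * obar2 o21 o22 h ^+ (n - k)).

Definition overtakes (W0 V0 : T -> R) (f g : R) n : set T :=
  [set t | V0 t * W n g t < W0 t * W n f t].

Lemma obar1_ge0 h : 0 <= h <= 1 -> 0 <= obar1 o11 o12 h.
Proof. exact: convex_comb_ge0. Qed.

Lemma obar2_ge0 h : 0 <= h <= 1 -> 0 <= obar2 o21 o22 h.
Proof. exact: convex_comb_ge0. Qed.

Lemma Wn_bits h n t : 0 <= h <= 1 -> ~ nonbinary x t ->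
  W n h t = Wk h n (count id (bits x n t)).
Proof.
move=> h01 bin; rewrite -[X in (X - _)%N](size_bits x n t) -prod_if_count.
rewrite /bits big_map /Wn big_add1 /= /index_iota subn0.
apply: eq_big_seq => i; rewrite mem_iota add0n => /andP[_ iltn].
have [->|->] : x i.+1 t = 0 \/ x i.+1 t = 1.
  by apply: contrapT => /not_orP[x0 x1]; apply: bin; exists i => //= -[].
- by rewrite powRr0 subr0 powRr1 ?obar1_ge0 ?obar2_ge0 // mul1r eq_sym oner_eq0.
- by rewrite powRr1 ?obar1_ge0 ?obar2_ge0 // subrr powRr0 mulr1 eqxx.
Qed.

Lemma measurable_Wn n h : measurable_fun setT (W n h).
Proof.
apply: measurable_prod => -[|i]; rewrite mem_index_iota // => _.
apply: measurable_funM; first exact: (measurableT_comp (measurable_powRr _) (x_meas i)).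
apply: (measurableT_comp (measurable_powRr _)); exact: measurable_funB.
Qed.

Lemma measurable_overtakes W0 V0 f g n :
  measurable_fun setT W0 -> measurable_fun setT V0 ->
  measurable (overtakes W0 V0 f g n).
Proof. by move=> mW mV; apply: measurable_ltr_set; apply: measurable_funM => //; exact: measurable_Wn. Qed.

Lemma overtakes_sub_not_swap W0 V0 f g n :
  overtakes W0 V0 f g n `<=` ~` overtakes V0 W0 g f n.
Proof. by move=> t /= lt_fg lt_gf; have := lt_trans lt_fg lt_gf; rewrite ltxx. Qed.

Lemma not_overtakes_sub W0 V0 f g n (q c eps : R) :
  0 <= f <= 1 -> 0 <= g <= 1 -> a * q ^+ n < eps ->
  (forall k, (k <= n)%N -> `|k%:R - n%:R * p| < c ->
    0 < Wk f n k /\ Wk g n k <= q ^+ n * Wk f n k) ->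
  ~` overtakes W0 V0 f g n `<=`
  ((W0 @^-1` `]-oo, eps]) `|` [set t | c <= `|nones (bits x n t) - n%:R * p|]) `|`
  ((V0 @^-1` ~` `[0, a]) `|` nonbinary x).
Proof.
move=> f01 g01 aq ratio t; apply: contra_notP => /not_orP[/not_orP[W0_big dev_small]].
move=> /not_orP[/contrapT/= V0_in bin]; rewrite /overtakes /=.
move: W0_big dev_small V0_in; rewrite /= in_itv /= => /negP; rewrite -ltNge => W0_big.
move=> /negP; rewrite -ltNge => dev_small /andP[V0_ge0 V0_le].
have kn : (count id (bits x n t) <= n)%N by rewrite -[X in (_ <= X)%N](size_bits x n t) count_size.
have [Wf_gt0 Wg_le] := ratio _ kn dev_small.
rewrite !Wn_bits //; set Wf := _ * _ in Wf_gt0 *; set Wg := _ * _ in Wg_le *.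
have Wg_ge0 : 0 <= Wg by rewrite mulr_ge0 ?exprn_ge0 ?obar1_ge0 ?obar2_ge0.
have h1 : V0 t * Wg <= a * Wg by exact: ler_wpM2r.
have h2 : a * Wg <= a * q ^+ n * Wf by rewrite -mulrA ler_pM2l.
have h3 : a * q ^+ n * Wf < W0 t * Wf by rewrite ltr_pM2r //; exact: lt_trans aq W0_big.
exact: le_lt_trans h1 (le_lt_trans h2 h3).
Qed.

Lemma probability_not_overtakes_le W0 V0 f g n (q c eps : R) :
  measurable_fun setT W0 -> measurable_fun setT V0 ->
  is_uniform0a P a W0 -> is_uniform0a P a V0 ->
  0 <= f <= 1 -> 0 <= g <= 1 -> 0 <= eps -> a * q ^+ n < eps -> 0 < c ->
  (forall k, (k <= n)%N -> `|k%:R - n%:R * p| < c ->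
    0 < Wk f n k /\ Wk g n k <= q ^+ n * Wk f n k) ->
  (P (~` overtakes W0 V0 f g n) <= (eps / a + n%:R * (p * (1 - p)) / c ^+ 2)%:E)%E.
Proof.
move=> mW0 mV0 W0_unif V0_unif f01 g01 eps0 aq c_gt0 ratio.
pose A := W0 @^-1` `]-oo, eps].
pose D := [set t | (c <= `|nones (bits x n t) - n%:R * p|)%R].
pose N := (V0 @^-1` ~` `[0, a]) `|` nonbinary x.
have mA : measurable A.
  by rewrite -[X in measurable X]setTI; apply: mW0 => //; exact: measurable_itv.
have mD : measurable D :=
  (probability_bits P x p x_meas x_bern x_indep n (fun s => c <= `|nones s - n%:R * p|)).1.
have mV0out : measurable (V0 @^-1` ~` `[0, a]).
  by rewrite -[X in measurable X]setTI; apply: mV0 => //; apply: measurableC; exact: measurable_itv.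
have mbin : measurable (nonbinary x) := measurable_nonbinary x x_meas.
have mN : measurable N by exact: measurableU.
have PN : P N = 0%E.
  apply/eqP; rewrite eq_le measure_ge0 andbT -(probability_uniform_out P _ _ V0_unif).
  by rewrite -[leRHS]adde0 -(probability_nonbinary P x p x_meas x_bern) measureU2.
have le_sub : (P (~` overtakes W0 V0 f g n) <= P (A `|` D `|` N))%E.
  apply: le_measure (not_overtakes_sub W0 V0 f g n q c eps f01 g01 aq ratio); rewrite inE.
    by apply: measurableC; exact: measurable_overtakes.
  by apply: measurableU => //; exact: measurableU.
have le_union : (P (A `|` D `|` N) <= P A + P D + P N)%E.
  apply: le_trans (measureU2 _ _ _) _ => //; first exact: measurableU.
  by apply: leeD => //; exact: measureU2.
apply: le_trans le_sub (le_trans le_union _).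
rewrite PN adde0 EFinD; apply: leeD; first exact: probability_uniform_le.
exact: bits_deviation_le.
Qed.

Lemma cvg_not_overtakes W0 V0 f g :
  measurable_fun setT W0 -> measurable_fun setT V0 ->
  is_uniform0a P a W0 -> is_uniform0a P a V0 ->
  0 <= f <= 1 -> 0 <= g <= 1 -> G g < G f ->
  P (~` overtakes W0 V0 f g n) @[n --> \oo] --> 0%E.
Proof.
move=> mW0 mV0 W0_unif V0_unif f01 g01 Ggf; apply: cvg_probability0 => eta eta0.
have [q [c [q01 c_gt0 cvg_var ratio]]] := typical_ratio _ _ _ _ _ p01
  (obar1_ge0 _ f01) (obar2_ge0 _ f01) (obar1_ge0 _ g01) (obar2_ge0 _ g01) Ggf.
pose eps := a * eta / 2.
have eps_gt0 : 0 < eps by rewrite divr_gt0 ?mulr_gt0.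
near=> n.
have aq : a * q ^+ n < eps by near: n; exact: eventually_mulr_expr_lt.
have cn_gt0 : 0 < c n by near: n.
apply: le_trans (probability_not_overtakes_le W0 V0 f g n q (c n) eps mW0 mV0
  W0_unif V0_unif f01 g01 (ltW eps_gt0) aq cn_gt0 (ratio n)) _.
rewrite lee_fin [leRHS]splitr (_ : eps / a = eta / 2); last by rewrite /eps; field; rewrite gt_eqF.
by rewrite lerD2l; near: n; apply: cvgr_le cvg_var _ _; rewrite divr_gt0.
Unshelve. all: by end_near.
Qed.

Lemma cvg_overtakes1 W0 V0 f g :
  measurable_fun setT W0 -> measurable_fun setT V0 ->
  is_uniform0a P a W0 -> is_uniform0a P a V0 ->
  0 <= f <= 1 -> 0 <= g <= 1 -> G g < G f ->
  P (overtakes W0 V0 f g n) @[n --> \oo] --> 1%E.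
Proof.
move=> mW0 mV0 W0_unif V0_unif f01 g01 Ggf.
apply: cvg_probability1 => [n|]; first exact: measurable_overtakes.
exact: cvg_not_overtakes.
Qed.

Lemma cvg_overtakes0 W0 V0 f g :
  measurable_fun setT W0 -> measurable_fun setT V0 ->
  is_uniform0a P a W0 -> is_uniform0a P a V0 ->
  0 <= f <= 1 -> 0 <= g <= 1 -> G f < G g ->
  P (overtakes W0 V0 f g n) @[n --> \oo] --> 0%E.
Proof.
move=> mW0 mV0 W0_unif V0_unif f01 g01 Gfg.
apply: (squeeze_cvge _ (cvg_cst 0%E) (cvg_not_overtakes _ _ _ _ mV0 mW0 V0_unif W0_unif g01 f01 Gfg)).
apply: nearW => n; rewrite measure_ge0 /=.
apply: le_measure (overtakes_sub_not_swap _ _ _ _ _); rewrite inE.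
  exact: measurable_overtakes.
by apply: measurableC; exact: measurable_overtakes.
Qed.

End StrategyComparison.

Lemma joint_family_indep {R : realType} {d : measure_display} {T : measurableType d}
    {P : probability T R} {W0 V0 : T -> R} {x : nat -> T -> R} :
  mutually_independent P (joint_family W0 V0 x) ->
  forall n (B : nat -> set R), (forall i, measurable (B i)) ->
  P (\bigcap_(i in [set i | (i < n)%N]) (x i.+1 @^-1` B i)) =
  (\prod_(i < n) P (x i.+1 @^-1` B i))%E.
Proof.
move=> [_ indep] n B mB.
have uniq_shift : uniq [seq i.+2 | i <- iota 0 n] by rewrite map_inj_uniq ?iota_uniq // => ? ? [].
have := indep _ (fun j => B j.-2) uniq_shift (fun j => mB j.-2).
rewrite big_map -(big_mkord xpredT (fun i => P (x i.+1 @^-1` B i))) /index_iota subn0 => <-.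
congr (P _); apply/seteqP; split => t /= H.
- by move=> j /mapP[i]; rewrite mem_iota add0n => /andP[_ iltn] ->; exact: H.
- by move=> i iltn; apply: (H i.+2); apply/mapP; exists i; rewrite // mem_iota add0n iltn.
Qed.

Theorem proposition7 (R : realType) (o11 o12 o21 o22 p a : R)
  (d : measure_display) (T : measurableType d) (P : probability T R)
  (x : nat -> T -> R) (W0 V0 : T -> R) (f g : R) :
  0 <= o12 -> o12 < o11 -> 0 <= o21 -> o21 < o22 -> 1 < o11 -> 1 < o22 ->
  0 <= p <= 1 -> 0 < a ->
  (forall i, (1 <= i)%N -> is_bernoulli P p (x i)) ->
  is_uniform0a P a W0 -> is_uniform0a P a V0 ->
  mutually_independent P (joint_family W0 V0 x) ->
  0 <= f <= 1 -> 0 <= g <= 1 ->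
  Grate o11 o12 o21 o22 p f != Grate o11 o12 o21 o22 p g ->
  let prob n := P [set t | V0 t * Wn o11 o12 o21 o22 x n g t <
                           W0 t * Wn o11 o12 o21 o22 x n f t] in
  (Grate o11 o12 o21 o22 p g < Grate o11 o12 o21 o22 p f ->
     prob @ \oo --> (1%R)%:E) /\
  (Grate o11 o12 o21 o22 p f < Grate o11 o12 o21 o22 p g ->
     prob @ \oo --> (0%R)%:E).
Proof.
move=> o12_ge0 o12_lt o21_ge0 o21_lt _ _ p01 a_gt0 x_bern W0_unif V0_unif indep f01 g01 _ prob.
have o11_ge0 : 0 <= o11 := le_trans o12_ge0 (ltW o12_lt).
have o22_ge0 : 0 <= o22 := le_trans o21_ge0 (ltW o21_lt).
have [meas _] := indep.
have W0_meas : measurable_fun setT W0 := meas 0%N.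
have V0_meas : measurable_fun setT V0 := meas 1%N.
have x_meas i : measurable_fun setT (x i.+1) := meas i.+2.
have x_bern1 i : is_bernoulli P p (x i.+1) := x_bern i.+1 isT.
have x_indep := joint_family_indep indep.
by split => G_lt; [apply: (cvg_overtakes1 P _ _ _ _ p a) | apply: (cvg_overtakes0 P _ _ _ _ p a)].
Qed.
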